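(* Let $A,B,C$ be finite-dimensional quantum systems, $C'$ a copy of $C$, and let $\Lambda^{C\to AB}$ be a channel extension of a channel $\Lambda^{C\to B}$. Then $\Lambda^{C\to AB}$ is an incoherent extension of $\Lambda^{C\to B}$ if and only if the Choi–Jamiołkowski state $J_{C'AB}(\Lambda^{C\to AB})$ is separable with respect to the bipartition $A : BC'$.
   Context: A channel extension of $\Lambda^{C\to B}$ is a channel (completely positive trace-preserving map) $\Lambda^{C\to AB}$ with $\mathrm{Tr}_A\circ\Lambda^{C\to AB}=\Lambda^{C\to B}$. An instrument is a collection $\{\Lambda_\lambda\}_\lambda$ of completely positive maps whose sum is a channel. The extension is incoherent if there exist an instrument $\{\Lambda^{C\to B}_\lambda\}_\lambda$ and unit-trace density operators $\{\sigma^A_\lambda\}_\lambda$ such that $\Lambda^{C\to AB}[X]=\sum_\lambda\Lambda^{C\to B}_\lambda[X]\otimes\sigma^A_\lambda$ for all $X$. The Choi–Jamiołkowski operator of a map $\Gamma^{C\to Y}$ is $J_{C'Y}(\Gamma)=(\mathrm{id}_{C'}\otimes\Gamma)[\psi_+^{CC'}]$, where $\psi_+^{CC'}$ is a fixed maximally entangled pure state of $C$ and $C'$. A state on $A\otimes(BC')$ is $A:BC'$-separable if it is a convex combination of product states $\tau^A\otimes\omega^{BC'}$. *)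

From HB Require Import structures.
From mathcomp Require Import all_boot all_order all_algebra.
From mathcomp Require Import complex mxtens.
From mathcomp Require Import reals.
Set Implicit Arguments.
Unset Strict Implicit.
Unset Printing Implicit Defensive.
Import Order.TTheory GRing.Theory Num.Theory.
Local Open Scope ring_scope.

Section Quantum.
Variable C : numClosedFieldType.

Definition adjmx m n (A : 'M[C]_(m, n)) : 'M[C]_(n, m) := (map_mx Num.conj A)^T.

Definition psdmx n (A : 'M[C]_n) : Prop :=
  adjmx A = A /\ forall v : 'rV[C]_n, 0 <= (v *m A *m adjmx v) 0 0.

Definition density n (A : 'M[C]_n) : Prop := psdmx A /\ \tr A = 1.

(* The (i,k) block of an operator on K (x) M (first tensor factor = outer index) *)
Definition blockmx k m (X : 'M[C]_(k * m)) (a c : 'I_k) : 'M[C]_m :=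
  \matrix_(b, d) X (mxtens_index (a, b)) (mxtens_index (c, d)).

Definition id_tens k m n (G : 'M[C]_m -> 'M[C]_n) (X : 'M[C]_(k * m))
  : 'M[C]_(k * n) :=
  \matrix_(i, j) G (blockmx X (mxtens_unindex i).1 (mxtens_unindex j).1)
                     (mxtens_unindex i).2 (mxtens_unindex j).2.

Definition is_linear_map m n (G : 'M[C]_m -> 'M[C]_n) : Prop :=
  forall (a : C) (X Y : 'M[C]_m), G (a *: X + Y) = a *: G X + G Y.

Definition cp_map m n (G : 'M[C]_m -> 'M[C]_n) : Prop :=
  is_linear_map G /\
  forall (k : nat) (X : 'M[C]_(k * m)), psdmx X -> psdmx (id_tens G X).

Definition trace_preserving m n (G : 'M[C]_m -> 'M[C]_n) : Prop :=
  forall X, \tr (G X) = \tr X.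

Definition channel m n (G : 'M[C]_m -> 'M[C]_n) : Prop :=
  cp_map G /\ trace_preserving G.

Definition ptrace1 dA dB (X : 'M[C]_(dA * dB)) : 'M[C]_dB :=
  \matrix_(b, b') \sum_(a < dA) X (mxtens_index (a, b)) (mxtens_index (a, b')).

Definition instrument (I : finType) m n (L : I -> 'M[C]_m -> 'M[C]_n) : Prop :=
  (forall i, cp_map (L i)) /\ channel (fun X => \sum_(i : I) L i X).

Definition channel_extension dA dB dC
  (Lab : 'M[C]_dC -> 'M[C]_(dA * dB)) (Lb : 'M[C]_dC -> 'M[C]_dB) : Prop :=
  channel Lab /\ forall X, ptrace1 (Lab X) = Lb X.

Definition incoherent_extension dA dB dC
  (Lab : 'M[C]_dC -> 'M[C]_(dA * dB)) : Prop :=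
  exists (I : finType) (L : I -> 'M[C]_dC -> 'M[C]_dB) (sigma : I -> 'M[C]_dA),
    instrument L /\ (forall i, density (sigma i)) /\
    forall X, Lab X = \sum_(i : I) (sigma i *t L i X).

Definition psi_plus d : 'M[C]_(d * d) :=
  \matrix_(i, j) if ((mxtens_unindex i).1 == (mxtens_unindex i).2) &&
                    ((mxtens_unindex j).1 == (mxtens_unindex j).2)
                 then (d%:R)^-1 else 0.

Definition choi m n (G : 'M[C]_m -> 'M[C]_n) : 'M[C]_(m * n) :=
  id_tens G (psi_plus m).

(* tau^A (x) omega^{BC'} written on C' (x) (A (x) B), omega on C' (x) B *)
Definition prod_A_BCp dC dA dB (tau : 'M[C]_dA) (omega : 'M[C]_(dC * dB))
  : 'M[C]_(dC * (dA * dB)) :=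
  \matrix_(i, j)
    let c  := (mxtens_unindex i).1 in
    let a  := (mxtens_unindex (mxtens_unindex i).2).1 in
    let b  := (mxtens_unindex (mxtens_unindex i).2).2 in
    let c' := (mxtens_unindex j).1 in
    let a' := (mxtens_unindex (mxtens_unindex j).2).1 in
    let b' := (mxtens_unindex (mxtens_unindex j).2).2 in
    tau a a' * omega (mxtens_index (c, b)) (mxtens_index (c', b')).

Definition separable_A_BCp dC dA dB (rho : 'M[C]_(dC * (dA * dB))) : Prop :=
  exists (I : finType) (p : I -> C) (tau : I -> 'M[C]_dA)
         (omega : I -> 'M[C]_(dC * dB)),
    (forall i, 0 <= p i) /\ \sum_(i : I) p i = 1 /\
    (forall i, density (tau i) /\ density (omega i)) /\
    rho = \sum_(i : I) p i *: prod_A_BCp (tau i) (omega i).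

End Quantum.

From HB Require Import structures.
From mathcomp Require Import all_boot all_order all_algebra.
From mathcomp Require Import complex mxtens.
From mathcomp Require Import reals.
From mathcomp Require Import ring.
(* If Lab[X] = sum_l sigma_l (x) L_l[X], the Choi operator of Lab is
   sum_l sigma_l (x) J(L_l); every J(L_l) is positive semidefinite, and
   normalising it by its trace exhibits an A : BC' separable decomposition, the
   traces summing to 1 because sum_l L_l is trace preserving.  Conversely, the
   Choi-Jamiolkowski isomorphism inverts a decomposition
   J(Lab) = sum_l p_l tau_l (x) omega_l into Lab = sum_l tau_l (x) L_l, where
   L_l is the map with Choi operator p_l omega_l.  Each L_l is completely
   positive since a positive semidefinite operator is a Gram matrix U^* U whose
   rows provide Kraus operators, and sum_l L_l = Tr_A o Lab = Lb is a channel
   because every tau_l has unit trace. *)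

Set Implicit Arguments.
Unset Strict Implicit.
Unset Printing Implicit Defensive.
Import Order.TTheory GRing.Theory Num.Theory.
Local Open Scope ring_scope.

Section ChoiSeparability.
Variable C : numClosedFieldType.

Lemma big_mxtens_index m n (F : 'I_(m * n) -> C) :
  \sum_k F k = \sum_a \sum_b F (mxtens_index (a, b)).
Proof.
rewrite pair_big /= (reindex (@mxtens_index m n)) /=.
  by apply: eq_bigr => -[a b] _.
by exists (@mxtens_unindex m n) => i _; rewrite (mxtens_indexK, mxtens_unindexK).
Qed.

Section LinearMap.
Variables (m n : nat) (G : 'M[C]_m -> 'M[C]_n).
Hypothesis linG : is_linear_map G.

Lemma linear_map0 : G 0 = 0.
Proof.
have G00 := linG 1 0 0; rewrite !scale1r addr0 in G00.
by apply: (@addrI _ (G 0)); rewrite addr0 -G00.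
Qed.

Lemma linear_mapD X Y : G (X + Y) = G X + G Y.
Proof. by have := linG 1 X Y; rewrite !scale1r. Qed.

Lemma linear_mapZ a X : G (a *: X) = a *: G X.
Proof. by have := linG a X 0; rewrite !addr0 linear_map0 addr0. Qed.

Lemma linear_map_sum (I : finType) (F : I -> 'M[C]_m) :
  G (\sum_i F i) = \sum_i G (F i).
Proof.
apply: (big_ind2 (fun x y => G x = y)) => // [|x1 x2 y1 y2 <- <-].
  exact: linear_map0.
exact: linear_mapD.
Qed.

Lemma linear_map_delta_expansion X :
  G X = \sum_c \sum_c' X c c' *: G (delta_mx c c').
Proof.
rewrite {1}(matrix_sum_delta X) linear_map_sum; apply: eq_bigr => c _.
by rewrite linear_map_sum; apply: eq_bigr => c' _; rewrite linear_mapZ.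
Qed.

End LinearMap.

Lemma adjmxK m n (A : 'M[C]_(m, n)) : adjmx (adjmx A) = A.
Proof. by apply/matrixP => i j; rewrite !mxE conjCK. Qed.

Lemma adjmxM m n p (A : 'M[C]_(m, n)) (B : 'M[C]_(n, p)) :
  adjmx (A *m B) = adjmx B *m adjmx A.
Proof. by rewrite /adjmx map_mxM trmx_mul. Qed.

Lemma adjmxD m n (A B : 'M[C]_(m, n)) : adjmx (A + B) = adjmx A + adjmx B.
Proof. by apply/matrixP => i j; rewrite !mxE rmorphD. Qed.

Lemma adjmxB m n (A B : 'M[C]_(m, n)) : adjmx (A - B) = adjmx A - adjmx B.
Proof. by apply/matrixP => i j; rewrite !mxE rmorphB. Qed.

Lemma adjmxZ m n a (A : 'M[C]_(m, n)) : adjmx (a *: A) = a^* *: adjmx A.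
Proof. by apply/matrixP => i j; rewrite !mxE rmorphM. Qed.

Lemma adjmx1 n : adjmx (1%:M : 'M[C]_n) = 1%:M.
Proof.
by apply/matrixP => i j; rewrite !mxE eq_sym; case: eqP; rewrite ?conjC1 ?conjC0.
Qed.

Lemma adjmx_tens m n p q (A : 'M[C]_(m, n)) (B : 'M[C]_(p, q)) :
  adjmx (A *t B) = adjmx A *t adjmx B.
Proof. by rewrite /adjmx map_mxT trmx_tens. Qed.

Lemma adj_col_mx m1 m2 n (U : 'M[C]_(m1, n)) (V : 'M[C]_(m2, n)) :
  adjmx (col_mx U V) *m col_mx U V = adjmx U *m U + adjmx V *m V.
Proof. by rewrite /adjmx map_col_mx tr_col_mx mul_row_col. Qed.

Lemma mulmx3E m n p q (P : 'M[C]_(m, n)) (Y : 'M[C]_(n, p)) (Q : 'M[C]_(p, q)) i j :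
  (P *m Y *m Q) i j = \sum_k \sum_l P i k * Y k l * Q l j.
Proof.
rewrite mxE exchange_big /=; apply: eq_bigr => l _.
by rewrite mxE mulr_suml.
Qed.

Lemma rowform_ge0 n (w : 'rV[C]_n) : 0 <= (w *m adjmx w) 0 0.
Proof. by rewrite mxE sumr_ge0 // => k _; rewrite !mxE mul_conjC_ge0. Qed.

Lemma qform_delta n (A : 'M[C]_n) i j :
  (delta_mx 0 i : 'rV[C]_n) *m A *m adjmx (delta_mx 0 j) = (A i j)%:M.
Proof.
apply/matrixP => x y; rewrite !ord1 mulmx3E (bigD1 i) //= [X in _ + X]big1.
- rewrite addr0 (bigD1 j) //= [X in _ + X]big1 => [|l lj].
    by rewrite !mxE !eqxx addr0 mul1r conjC1 mulr1.
  by rewrite !mxE (negbTE lj) andbF rmorph0 mulr0.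
- by move=> k ki; apply: big1 => l _; rewrite !mxE (negbTE ki) andbF !mul0r.
Qed.

Lemma psdmx0 n : psdmx (0 : 'M[C]_n).
Proof.
split; first by apply/matrixP => i j; rewrite !mxE rmorph0.
by move=> v; rewrite mulmx0 mul0mx mxE.
Qed.

Lemma psdmxD n (A B : 'M[C]_n) : psdmx A -> psdmx B -> psdmx (A + B).
Proof.
move=> [hA qA] [hB qB]; split; first by rewrite adjmxD hA hB.
by move=> v; rewrite mulmxDr mulmxDl mxE addr_ge0.
Qed.

Lemma psdmx_sum n (I : finType) (F : I -> 'M[C]_n) :
  (forall i, psdmx (F i)) -> psdmx (\sum_i F i).
Proof.
move=> psdF; apply: (big_ind (@psdmx C n)) => //; [exact: psdmx0|exact: psdmxD].
Qed.

Lemma psdmxZ n a (A : 'M[C]_n) : 0 <= a -> psdmx A -> psdmx (a *: A).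
Proof.
move=> a0 [hA qA]; split; first by rewrite adjmxZ hA geC0_conj.
by move=> v; rewrite -scalemxAr -scalemxAl mxE mulr_ge0.
Qed.

Lemma psdmx_congr m n (T : 'M[C]_(m, n)) (X : 'M[C]_n) :
  psdmx X -> psdmx (T *m X *m adjmx T).
Proof.
move=> [hX qX]; split; first by rewrite !adjmxM adjmxK hX mulmxA.
by move=> v; have := qX (v *m T); rewrite adjmxM !mulmxA.
Qed.

Lemma psdmx_gram m n (U : 'M[C]_(m, n)) : psdmx (adjmx U *m U).
Proof.
split=> [|v]; first by rewrite adjmxM adjmxK.
suff -> : v *m (adjmx U *m U) *m adjmx v = (v *m adjmx U) *m adjmx (v *m adjmx U).
  exact: rowform_ge0.
by rewrite adjmxM adjmxK !mulmxA.
Qed.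

Lemma psdmx_diag_ge0 n (A : 'M[C]_n) i : psdmx A -> 0 <= A i i.
Proof. by move=> [_ q]; have := q (delta_mx 0 i); rewrite qform_delta mxE eqxx. Qed.

Lemma psdmx_herm n (A : 'M[C]_n) i j : psdmx A -> A j i = (A i j)^*.
Proof. by move=> [h _]; rewrite -{1}h !mxE. Qed.

Lemma qform_delta2 n (A : 'M[C]_n) i j s t :
  let v := s *: (delta_mx 0 i : 'rV[C]_n) + t *: delta_mx 0 j in
  (v *m A *m adjmx v) 0 0 =
  s * s^* * A i i + s * t^* * A i j + t * s^* * A j i + t * t^* * A j j.
Proof.
rewrite /= adjmxD !adjmxZ !mulmxDl !mulmxDr -!scalemxAl -!scalemxAr !qform_delta.
by rewrite !mxE /= !mulr1n; ring.
Qed.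

Lemma psdmx_diag0_row n (A : 'M[C]_n) i j : psdmx A -> A i i = 0 -> A i j = 0.
Proof.
move=> psdA Aii0; apply/eqP; apply: contraT => Aij0.
(* s is chosen so that the form at s e_i + e_j equals -1. *)
pose x := A j j; pose s := - (x + 1) / (2 * A i j).
have sAij : s * A i j = - ((x + 1) / 2) by rewrite /s; field.
have sAij_real : (s * A i j)^* = s * A i j.
  rewrite sAij rmorphN; congr (- _); apply: geC0_conj; rewrite divr_ge0 ?ler0n //.
  by rewrite addr_ge0 ?ler01 ?psdmx_diag_ge0.
rewrite rmorphM in sAij_real.
have := psdA.2 (s *: delta_mx 0 i + 1 *: delta_mx 0 j).
rewrite qform_delta2 Aii0 (psdmx_herm i j psdA) conjC1 mulr0 add0r !mulr1 !mul1r.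
rewrite sAij_real sAij -/x.
have -> : - ((x + 1) / 2) + - ((x + 1) / 2) + x = -1 by field.
by rewrite oppr_ge0 ler10.
Qed.

Lemma psdmx_diag0_col n (A : 'M[C]_n) i j : psdmx A -> A i i = 0 -> A j i = 0.
Proof.
by move=> psdA Aii0; rewrite (psdmx_herm i j psdA) (psdmx_diag0_row j psdA) ?conjC0.
Qed.

Lemma psdmx_diag0 n (A : 'M[C]_n) : psdmx A -> (forall i, A i i = 0) -> A = 0.
Proof. by move=> psdA diag0; apply/matrixP => i j; rewrite mxE psdmx_diag0_row. Qed.

Lemma psdmx_tr_ge0 n (A : 'M[C]_n) : psdmx A -> 0 <= \tr A.
Proof. by move=> psdA; rewrite sumr_ge0 // => i _; apply: psdmx_diag_ge0. Qed.

Lemma psdmx_tr0 n (A : 'M[C]_n) : psdmx A -> \tr A = 0 -> A = 0.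
Proof.
move=> psdA /psumr_eq0P diag0; apply: psdmx_diag0 => // i.
by apply: diag0 => // j _; apply: psdmx_diag_ge0.
Qed.

Lemma schur_complement_congr n (A : 'M[C]_n) i : adjmx A = A -> A i i != 0 ->
  let u := row i A in let c := (A i i)^-1 in
  A - c *: (adjmx u *m u) =
  (1%:M - c *: (adjmx u *m delta_mx 0 i)) *m A *m
  adjmx (1%:M - c *: (adjmx u *m delta_mx 0 i)).
Proof.
move=> hA Aii0 u c.
have Aii_real : (A i i)^* = A i i by rewrite -[in RHS]hA !mxE.
have c_real : c^* = c by rewrite /c fmorphV /= Aii_real.
have eA : delta_mx 0 i *m A = u by rewrite -rowE.
have Ae : A *m adjmx (delta_mx 0 i) = adjmx u by rewrite -eA adjmxM hA.
have ueA : u *m adjmx (delta_mx 0 i) = (A i i)%:M by rewrite -eA qform_delta.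
rewrite adjmxB adjmx1 adjmxZ adjmxM adjmxK c_real.
rewrite mulmxBl mul1mx -scalemxAl -mulmxA eA.
rewrite mulmxBr mulmx1 -!scalemxAr mulmxBl -scalemxAl !mulmxA Ae.
rewrite -[adjmx u *m u *m _]mulmxA ueA mul_mx_scalar -scalemxAl scalerA mulVf //.
by rewrite scale1r subrr scaler0 subr0.
Qed.

Lemma psdmx_schur_complement n (A : 'M[C]_n) i : psdmx A -> A i i != 0 ->
  psdmx (A - (A i i)^-1 *: (adjmx (row i A) *m row i A)).
Proof.
by move=> psdA Aii0; rewrite schur_complement_congr //; [apply: psdmx_congr|case: psdA].
Qed.

Lemma schur_complementE n (A : 'M[C]_n) i j k :
  (A - (A i i)^-1 *: (adjmx (row i A) *m row i A)) j k =
  A j k - (A i i)^-1 * ((A i j)^* * A i k).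
Proof. by rewrite !mxE big_ord1 !mxE. Qed.

Lemma psdmx_gram_factor n (A : 'M[C]_n) :
  psdmx A -> exists m (U : 'M[C]_(m, n)), A = adjmx U *m U.
Proof.
(* Induction on k, where only the first k diagonal entries may be nonzero; each
   step splits off the rank-one part of a Schur complement. *)
suff factor k (B : 'M[C]_n) : psdmx B -> (forall i : 'I_n, (k <= i)%N -> B i i = 0) ->
    exists m (U : 'M[C]_(m, n)), B = adjmx U *m U.
  by move=> psdA; apply: (factor n) => // i; rewrite leqNgt ltn_ord.
elim: k B => [|k IHk] B psdB diag0.
  by exists 0%N, 0; rewrite mulmx0 (psdmx_diag0 psdB) // => i; apply: diag0.
have [nk|kn] := leqP n k.
  by apply: IHk => // i ki; have := ltn_ord i; rewrite ltnNge (leq_trans nk ki).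
pose i := Ordinal kn.
have diag0_ge_i (j : 'I_n) : (k <= j)%N -> j != i -> B j j = 0.
  by move=> kj ji; apply: diag0; rewrite ltn_neqAle kj andbT eq_sym.
have [Bii0|Bii0] := eqVneq (B i i) 0.
  by apply: IHk => // j kj; have [->|] := eqVneq j i; last exact: diag0_ge_i.
have [j|m [U BE]] := IHk _ (psdmx_schur_complement psdB Bii0).
  move=> kj; rewrite schur_complementE; have [->|ji] := eqVneq j i.
    by rewrite -[in (B i i)^*](psdmx_herm i i psdB) mulrCA mulVf // mulr1 subrr.
  have Bjj0 := diag0_ge_i j kj ji.
  by rewrite Bjj0 (psdmx_diag0_col i psdB Bjj0) conjC0 !mul0r mulr0 subrr.
exists (m + 1)%N, (col_mx U (sqrtC (B i i)^-1 *: row i B)).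
rewrite adj_col_mx -BE adjmxZ -scalemxAl -scalemxAr scalerA.
rewrite geC0_conj ?sqrtC_ge0 ?invr_ge0 ?psdmx_diag_ge0 // -expr2 sqrtCK.
by rewrite subrK.
Qed.

Lemma sum_mx1_mul n (a : 'I_n) (F : 'I_n -> C) :
  \sum_c (1%:M : 'M[C]_n) a c * F c = F a.
Proof.
rewrite (bigD1 a) //= big1 => [|c ca]; last by rewrite mxE eq_sym (negbTE ca) mul0r.
by rewrite mxE eqxx mul1r addr0.
Qed.

Lemma tens1mx_mulE k m n p (K : 'M[C]_(n, m)) (X : 'M[C]_(k * m, p)) a b j :
  ((1%:M : 'M_k) *t K *m X) (mxtens_index (a, b)) j =
  \sum_e K b e * X (mxtens_index (a, e)) j.
Proof.
rewrite mxE big_mxtens_index.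
under eq_bigr do under eq_bigr do rewrite tensmxE -mulrA.
under eq_bigr do rewrite -mulr_sumr.
exact: sum_mx1_mul.
Qed.

Lemma mul_tens1mxE k m n p (X : 'M[C]_(p, k * m)) (L : 'M[C]_(m, n)) i a b :
  (X *m ((1%:M : 'M_k) *t L)) i (mxtens_index (a, b)) =
  \sum_e X i (mxtens_index (a, e)) * L e b.
Proof.
have tr_eq := tens1mx_mulE L^T X^T a b i.
rewrite -trmx1 -trmx_tens -trmx_mul mxE in tr_eq; rewrite tr_eq.
by apply: eq_bigr => e _; rewrite !mxE mulrC.
Qed.

Lemma id_tens_mulmx k m n (K : 'M[C]_(n, m)) (L : 'M[C]_(m, n)) (X : 'M[C]_(k * m)) :
  id_tens (fun Y => K *m Y *m L) X = (1%:M : 'M_k) *t K *m X *m (1%:M *t L).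
Proof.
apply/matrixP => i j; case: (mxtens_indexP i) => a b; case: (mxtens_indexP j) => a' b'.
rewrite mxE !mxtens_indexK mul_tens1mxE mulmx3E exchange_big /=.
apply: eq_bigr => e' _; rewrite tens1mx_mulE mulr_suml.
by apply: eq_bigr => e _; rewrite mxE.
Qed.

Lemma cp_map_ext m n (G H : 'M[C]_m -> 'M[C]_n) :
  G =1 H -> cp_map G -> cp_map H.
Proof.
move=> GH [linG cpG]; split=> [a X Y|k X psdX]; first by rewrite -!GH.
suff <- : id_tens G X = id_tens H X by exact: cpG.
by apply/matrixP => i j; rewrite !mxE GH.
Qed.

Lemma channel_ext m n (G H : 'M[C]_m -> 'M[C]_n) :
  G =1 H -> channel G -> channel H.
Proof. by move=> GH [cpG tpG]; split=> [|X]; [exact: cp_map_ext cpG|rewrite -GH]. Qed.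

Lemma cp_map_sum m n (I : finType) (G : I -> 'M[C]_m -> 'M[C]_n) :
  (forall i, cp_map (G i)) -> cp_map (fun X => \sum_i G i X).
Proof.
move=> cpG; split=> [a X Y|k X psdX].
  rewrite scaler_sumr -big_split; apply: eq_bigr => i _.
  by rewrite (cpG i).1.
suff -> : id_tens (fun X => \sum_i G i X) X = \sum_i id_tens (G i) X.
  by apply: psdmx_sum => i; apply: (cpG i).2.
by apply/matrixP => a b; rewrite mxE !summxE; apply: eq_bigr => i _; rewrite mxE.
Qed.

Lemma cp_mapZ m n a (G : 'M[C]_m -> 'M[C]_n) :
  0 <= a -> cp_map G -> cp_map (fun X => a *: G X).
Proof.
move=> a_ge0 [linG cpG]; split=> [b X Y|k X psdX].
  by rewrite linG scalerDr !scalerA mulrC.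
suff -> : id_tens (fun X => a *: G X) X = a *: id_tens G X by exact/psdmxZ/cpG.
by apply/matrixP => i j; rewrite !mxE.
Qed.

Lemma cp_map_kraus m n (K : 'M[C]_(n, m)) : cp_map (fun Y => K *m Y *m adjmx K).
Proof.
split=> [a X Y|k X psdX].
  by rewrite mulmxDr mulmxDl -scalemxAr -scalemxAl.
rewrite id_tens_mulmx -[1%:M in X in _ *m (X *t _)]adjmx1 -adjmx_tens.
exact: psdmx_congr.
Qed.

Lemma blockmx_psi_plus d (c c' : 'I_d) :
  blockmx (psi_plus C d) c c' = (d%:R)^-1 *: delta_mx c c'.
Proof.
apply/matrixP => b e; rewrite !mxE !mxtens_indexK /= [b == c]eq_sym [e == c']eq_sym.
by case: (c == b); case: (c' == e); rewrite ?mulr1 ?mulr0.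
Qed.

Lemma choiE m n (G : 'M[C]_m -> 'M[C]_n) c c' y y' :
  choi G (mxtens_index (c, y)) (mxtens_index (c', y')) =
  G ((m%:R)^-1 *: delta_mx c c') y y'.
Proof. by rewrite mxE !mxtens_indexK blockmx_psi_plus. Qed.

Lemma psdmx_psi_plus d : psdmx (psi_plus C d).
Proof.
pose u : 'rV[C]_(d * d) := \row_k ((mxtens_unindex k).1 == (mxtens_unindex k).2)%:R.
suff -> : psi_plus C d = (d%:R)^-1 *: (adjmx u *m u).
  by apply: psdmxZ (psdmx_gram u); rewrite invr_ge0 ler0n.
apply/matrixP => i j; rewrite !mxE big_ord1 !mxE.
by case: (_ == _); case: (_ == _); rewrite ?conjC1 ?conjC0 ?mulr1 ?mulr0 ?mul0r.
Qed.

Lemma psdmx_choi m n (G : 'M[C]_m -> 'M[C]_n) : cp_map G -> psdmx (choi G).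
Proof. by move=> [_ cpG]; apply/cpG/psdmx_psi_plus. Qed.

Lemma choi_sum m n (I : finType) (G : I -> 'M[C]_m -> 'M[C]_n) :
  choi (fun X => \sum_i G i X) = \sum_i choi (G i).
Proof.
by apply/matrixP => x y; rewrite mxE !summxE; apply: eq_bigr => i _; rewrite mxE.
Qed.

Lemma mxtrace_delta n (c : 'I_n) : \tr (delta_mx c c : 'M[C]_n) = 1.
Proof.
rewrite /mxtrace (bigD1 c) //= big1 => [|i ic]; last by rewrite mxE (negbTE ic).
by rewrite mxE eqxx addr0.
Qed.

Lemma mxtrace_choi m n (G : 'M[C]_m -> 'M[C]_n) :
  (0 < m)%N -> trace_preserving G -> \tr (choi G) = 1.
Proof.
move=> m_gt0 tpG; rewrite /mxtrace big_mxtens_index.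
under eq_bigr do under eq_bigr do rewrite choiE.
under eq_bigr do rewrite -/(mxtrace _) tpG mxtraceZ mxtrace_delta mulr1.
by rewrite sumr_const card_ord -[_ *+ m]mulr_natr mulVf // pnatr_eq0 -lt0n.
Qed.

(* The inverse of the Choi map; the factor m undoes the normalisation of
   psi_plus. *)
Definition map_of_choi m n (w : 'M[C]_(m * n)) (X : 'M[C]_m) : 'M[C]_n :=
  m%:R *: \matrix_(b, b')
    \sum_c \sum_c' X c c' * w (mxtens_index (c, b)) (mxtens_index (c', b')).

Lemma map_of_choiK m n (G : 'M[C]_m -> 'M[C]_n) X :
  (0 < m)%N -> is_linear_map G -> map_of_choi (choi G) X = G X.
Proof.
move=> m_gt0 linG; rewrite [RHS](linear_map_delta_expansion linG).
apply/matrixP => b b'; rewrite !mxE !summxE mulr_sumr; apply: eq_bigr => c _.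
rewrite !summxE mulr_sumr; apply: eq_bigr => c' _.
by rewrite choiE (linear_mapZ linG) !mxE mulrCA mulVKf // pnatr_eq0 -lt0n.
Qed.

Lemma map_of_choi_sum m n (I : finType) (w : I -> 'M[C]_(m * n)) X :
  map_of_choi (\sum_i w i) X = \sum_i map_of_choi (w i) X.
Proof.
rewrite /map_of_choi -scaler_sumr; congr (_ *: _); apply/matrixP => b b'.
rewrite !mxE summxE; under [RHS]eq_bigr do rewrite mxE.
rewrite [RHS]exchange_big; apply: eq_bigr => c _.
rewrite [RHS]exchange_big; apply: eq_bigr => c' _.
by rewrite summxE mulr_sumr.
Qed.

Lemma map_of_choi_prod m da db (tau : 'M[C]_da) (w : 'M[C]_(m * db)) X :
  map_of_choi (prod_A_BCp tau w) X = tau *t map_of_choi w X.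
Proof.
apply/matrixP => i j; case: (mxtens_indexP i) => a b; case: (mxtens_indexP j) => a' b'.
rewrite tensmxE !mxE [RHS]mulrCA; congr (_ * _).
rewrite mulr_sumr; apply: eq_bigr => c _.
rewrite mulr_sumr; apply: eq_bigr => c' _.
by rewrite mxE !mxtens_indexK /= mulrCA.
Qed.

Lemma cp_map_of_choi m n (w : 'M[C]_(m * n)) : psdmx w -> cp_map (map_of_choi w).
Proof.
move=> /psdmx_gram_factor [k [U ->]].
pose K j : 'M[C]_(n, m) := \matrix_(b, c) (U j (mxtens_index (c, b)))^*.
apply: (cp_map_ext (G := fun X => m%:R *: \sum_j K j *m X *m adjmx (K j))).
  move=> X; congr (_ *: _); apply/matrixP => b b'; rewrite summxE mxE.
  under eq_bigr do rewrite mulmx3E.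
  rewrite exchange_big; apply: eq_bigr => c _.
  rewrite exchange_big; apply: eq_bigr => c' _.
  rewrite !mxE mulr_sumr; apply: eq_bigr => j _.
  by rewrite !mxE conjCK mulrCA mulrA.
by apply/cp_mapZ/cp_map_sum => [|j]; [exact: ler0n|exact: cp_map_kraus].
Qed.

Lemma prod_A_BCpZ m da db (tau : 'M[C]_da) (w : 'M[C]_(m * db)) a :
  prod_A_BCp tau (a *: w) = a *: prod_A_BCp tau w.
Proof. by apply/matrixP => i j; rewrite !mxE /= !mxE mulrCA. Qed.

Lemma ptrace1_tens da db (A : 'M[C]_da) (B : 'M[C]_db) :
  ptrace1 (A *t B) = \tr A *: B.
Proof.
apply/matrixP => b b'; rewrite !mxE mulr_suml; apply: eq_bigr => a _.
by rewrite tensmxE.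
Qed.

Lemma ptrace1_sum da db (I : finType) (F : I -> 'M[C]_(da * db)) :
  ptrace1 (\sum_i F i) = \sum_i ptrace1 (F i).
Proof.
apply/matrixP => b b'; rewrite mxE summxE; under eq_bigr do rewrite summxE.
by rewrite exchange_big; apply: eq_bigr => i _; rewrite mxE.
Qed.

Lemma density_delta n (i : 'I_n) : density (delta_mx i i : 'M[C]_n).
Proof.
split; last exact: mxtrace_delta.
suff -> : delta_mx i i = adjmx (delta_mx 0 i : 'rV[C]_n) *m delta_mx 0 i.
  exact: psdmx_gram.
apply/matrixP => a b; rewrite !mxE big_ord1 !mxE /= conjC_nat.
by case: (a == i); rewrite ?mul0r ?mul1r.
Qed.

Lemma psdmx_normalize n (w : 'M[C]_n) : (0 < n)%N -> psdmx w ->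
  exists omega, density omega /\ w = \tr w *: omega.
Proof.
move=> n_gt0 psdw; have [tr0|tr_neq0] := eqVneq (\tr w) 0.
  exists (delta_mx (Ordinal n_gt0) (Ordinal n_gt0)); split; first exact: density_delta.
  by rewrite tr0 scale0r (psdmx_tr0 psdw tr0).
exists ((\tr w)^-1 *: w); split; last by rewrite scalerA mulfV ?scale1r.
split; last by rewrite mxtraceZ mulVf.
by apply: psdmxZ (psdw); rewrite invr_ge0 psdmx_tr_ge0.
Qed.

Lemma choi_incoherent m da db (I : finType) (L : I -> 'M[C]_m -> 'M[C]_db)
    (sigma : I -> 'M[C]_da) (Lab : 'M[C]_m -> 'M[C]_(da * db)) :
  (forall X, Lab X = \sum_i sigma i *t L i X) ->
  choi Lab = \sum_i prod_A_BCp (sigma i) (choi (L i)).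
Proof.
move=> LabE; apply/matrixP => x y.
case: (mxtens_indexP x) => c z; case: (mxtens_indexP z) => a b.
case: (mxtens_indexP y) => c' z'; case: (mxtens_indexP z') => a' b'.
rewrite choiE LabE !summxE; apply: eq_bigr => i _.
by rewrite tensmxE mxE !mxtens_indexK /= choiE.
Qed.

Lemma incoherent_extension_separable_choi dA dB dC
    (Lab : 'M[C]_dC -> 'M[C]_(dA * dB)) :
  (0 < dB)%N -> (0 < dC)%N -> incoherent_extension Lab -> separable_A_BCp (choi Lab).
Proof.
move=> dB_gt0 dC_gt0 [I [L [sigma [[cpL chL] [dens_sigma LabE]]]]].
have dCB_gt0 : (0 < dC * dB)%N by rewrite muln_gt0 dC_gt0 dB_gt0.
have [omega omegaE] :=
  fin_all_exists (fun i => psdmx_normalize dCB_gt0 (psdmx_choi (cpL i))).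
exists I, (fun i => \tr (choi (L i))), sigma, omega.
split=> [i|]; first exact/psdmx_tr_ge0/psdmx_choi.
split; first by rewrite -raddf_sum -choi_sum; exact: mxtrace_choi chL.2.
split=> [i|]; first by split; [exact: dens_sigma|exact: (omegaE i).1].
rewrite (choi_incoherent LabE); apply: eq_bigr => i _.
by rewrite -prod_A_BCpZ -(omegaE i).2.
Qed.

Lemma separable_choi_incoherent_extension dA dB dC
    (Lb : 'M[C]_dC -> 'M[C]_dB) (Lab : 'M[C]_dC -> 'M[C]_(dA * dB)) :
  (0 < dC)%N -> channel Lb -> channel_extension Lab Lb ->
  separable_A_BCp (choi Lab) -> incoherent_extension Lab.
Proof.
move=> dC_gt0 chLb [chLab LabLb] [I [p [tau [omega [p_ge0 [_ [dens choiLab]]]]]]].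
pose L i := map_of_choi (p i *: omega i).
have LabE X : Lab X = \sum_i tau i *t L i X.
  rewrite -(map_of_choiK X dC_gt0 chLab.1.1) choiLab map_of_choi_sum.
  by apply: eq_bigr => i _; rewrite -prod_A_BCpZ map_of_choi_prod.
exists I, L, tau; split; last by split=> [i|]; [exact: (dens i).1|].
split=> [i|]; first exact/cp_map_of_choi/psdmxZ/(dens i).2.1.
apply: channel_ext chLb => X; rewrite -LabLb LabE ptrace1_sum.
by apply: eq_bigr => i _; rewrite ptrace1_tens (dens i).1.2 scale1r.
Qed.

End ChoiSeparability.

Theorem theorem2 (R : realType) (dA dB dC : nat)
  (hA : (0 < dA)%N) (hB : (0 < dB)%N) (hC : (0 < dC)%N)
  (Lb : 'M[R[i]]_dC -> 'M[R[i]]_dB)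
  (Lab : 'M[R[i]]_dC -> 'M[R[i]]_(dA * dB)) :
  channel Lb -> channel_extension Lab Lb ->
  (incoherent_extension Lab <-> separable_A_BCp (choi Lab)).
Proof.
move=> chLb extLab; split; first exact: incoherent_extension_separable_choi.
exact: separable_choi_incoherent_extension chLb extLab.
Qed.
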